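(* Let $q\ge2$. For every small $\epsilon\in(0,1)$ and every $0\le\kappa<\frac{q-1}{q}$, with probability at least $1-q^{-n}$, a random code $\mathcal{C}\subseteq\Sigma_q^n$ of rate $R=1-H_q(\kappa)-\epsilon$ is list decodable against any $\kappa$ fraction of deletions (i.e., $\kappa n$ deletions) with list size $O(1/\epsilon)$, for all sufficiently large $n$.
   Context: $\Sigma_q$ is a finite alphabet of size $q$. A code $\mathcal{C}\subseteq\Sigma_q^n$ is list decodable against $\kappa n$ deletions with list size $L$ if for every word $\mathbf r$ there are at most $L$ codewords $\mathbf c\in\mathcal{C}$ such that $\mathbf r$ can be obtained from $\mathbf c$ by at most $\kappa n$ single-symbol deletions. The rate is $\log_q|\mathcal{C}|/n$; a random code of rate $R$ is a uniformly random subset of $\Sigma_q^n$ of size $q^{Rn}$. $H_q(x)=x\log_q(q-1)-x\log_qx-(1-x)\log_q(1-x)$ for $0<x<1$, $H_q(0)=H_q(1)=0$. *)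

From mathcomp Require Import all_boot.
From Stdlib Require Import Reals ClassicalEpsilon.

Local Open Scope R_scope.

Definition pbool (P : Prop) : bool :=
  if excluded_middle_informative P then true else false.

Definition logq (q : nat) (x : R) : R := (ln x / ln (INR q))%R.

(* q-ary entropy: H_q(x) for 0<x<1, and H_q(0)=H_q(1)=0 (value outside [0,1] irrelevant). *)
Definition Hq (q : nat) (x : R) : R :=
  if Rle_dec x 0 then 0%R
  else if Rle_dec 1 x then 0%R
  else (x * logq q (INR q - 1) - x * logq q x - (1 - x) * logq q (1 - x))%R.

Definition word (q n : nat) := (n.-tuple 'I_q).

Definition obtainable_by_deletions (q n : nat) (kappa : R) (c : word q n) (r : seq 'I_q) : Prop :=
  subseq r (tval c) /\ (INR (n - size r) <= kappa * INR n)%R.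

Definition list_decodable_deletions (q n : nat) (kappa : R) (L : R) (C : {set word q n}) : Prop :=
  forall r : seq 'I_q,
    (INR #|[set c in C | pbool (obtainable_by_deletions q n kappa c r)]| <= L)%R.

(* Size of a code of rate Rt: floor(q^(Rt n)). *)
Definition code_size (q n : nat) (Rt : R) : nat :=
  Z.to_nat (Int_part (Rpower (INR q) (Rt * INR n))).

(* Probability that a uniformly random subset of Sigma_q^n of size M satisfies P. *)
Definition prob_random_code (q n M : nat) (P : {set word q n} -> Prop) : R :=
  (INR #|[set C : {set word q n} | (#|C| == M) && pbool (P C)]|
   / INR #|[set C : {set word q n} | #|C| == M]|)%R.

From Stdlib Require Import Reals Lra Lia ZArith Classical ClassicalEpsilon.
From mathcomp Require Import all_boot zify.

(* A word r of length m >= (1 - kappa) n is a subsequence of at most q^(H_q(kappa) n) words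
   of length n: splitting on the first letter bounds their number by x^-(n-m) (1 + (q-1) x)^n
   for every 0 < x <= 1, and x = kappa / ((q-1)(1-kappa)) turns this into q^(H_q(kappa) n).
   A code of size M fails to be list decodable only if, for some such r, it contains k > L of
   these words; for a uniformly random code this has probability at most
   C(q^(H_q(kappa) n), k) (M / q^n)^k <= q^(-eps n k) when M <= q^((1 - H_q(kappa) - eps) n).
   With L = 3 / eps and a union bound over the at most (n+1) q^n words r, the failure
   probability is at most (n+1) q^n q^(-3n) <= q^(-n), for every n. *)

(** * Words containing a given subsequence *)

Section Supersequences.

Variable T : finType.

Definition supersequences (n : nat) (r : seq T) : {set n.-tuple T} :=
  [set c : n.-tuple T | subseq r (tval c)].

Lemma card_tuple_cons n (P : pred (seq T)) :
  #|[set c : n.+1.-tuple T | P c]| =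
  \sum_(a : T) #|[set w : n.-tuple T | P (a :: w)]|.
Proof.
have cons_bij : bijective (fun p : T * n.-tuple T => [tuple of p.1 :: p.2]).
  exists (fun c : n.+1.-tuple T => (thead c, [tuple of behead c])).
    by case=> a w; congr pair; apply: val_inj.
  by case/tupleP=> a w; apply: val_inj.
rewrite -sum1dep_card (reindex _ (onW_bij _ cons_bij)) /= big_mkcond /=.
rewrite -(pair_big xpredT xpredT (fun a (w : n.-tuple T) => if P (a :: w) then 1 else 0)).
by apply: eq_bigr => a _; rewrite -sum1dep_card [RHS]big_mkcond.
Qed.

Lemma card_supersequences_nil n : #|supersequences n [::]| = (#|T| ^ n)%N.
Proof.
rewrite -card_tuple -cardsT; apply: eq_card => c.
by rewrite !inE sub0seq.
Qed.

Lemma card_supersequences_small n r :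
  (n < size r)%N -> #|supersequences n r| = 0%N.
Proof.
move=> ltnr; apply: eq_card0 => c; rewrite inE; apply/negP => /size_subseq.
by rewrite size_tuple leqNgt ltnr.
Qed.

Lemma card_supersequences_full n r :
  size r = n -> (#|supersequences n r| <= 1)%N.
Proof.
move=> szr; apply/card_le1_eqP => c1 c2; rewrite !inE.
have subseq_eq (c : n.-tuple T) : subseq r c -> r = c.
  by move/size_subseq_leqif=> [_]; rewrite size_tuple szr eqxx => /esym/eqP.
by move=> /subseq_eq e1 /subseq_eq e2; apply: val_inj => /=; rewrite -e1 -e2.
Qed.

Lemma card_supersequencesS n b r :
  #|supersequences n.+1 (b :: r)| =
  (#|supersequences n r| + #|T|.-1 * #|supersequences n (b :: r)|)%N.
Proof.
rewrite card_tuple_cons (bigD1 b) //= eqxx; congr addn.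
rewrite (eq_bigr (fun _ => #|supersequences n (b :: r)|)); last first.
  by move=> a /negbTE ab; apply: eq_card => w; rewrite !inE /= eq_sym ab.
by rewrite sum_nat_const cardC1 mulnC.
Qed.

End Supersequences.

Local Open Scope R_scope.

Lemma INR_expn m n : INR (m ^ n) = INR m ^ n.
Proof. by elim: n => [|n IHn]; rewrite ?expn0 // expnS mult_INR IHn. Qed.

Lemma card_supersequences_le (T : finType) (x : R) n r :
  0 < x <= 1 -> (0 < #|T|)%N -> (size r <= n)%N ->
  INR #|supersequences T n r| <= (/ x) ^ (n - size r) * (1 + (INR #|T| - 1) * x) ^ n.
Proof.
move=> [x_gt0 x_le1] T_gt0.
have T_ge1 : 1 <= INR #|T| by apply: (le_INR 1); apply/leP.
set y := 1 + (INR #|T| - 1) * x.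
have y_ge1 : 1 <= y by rewrite /y; nra.
have y_over_x : y * / x = / x + (INR #|T| - 1) by rewrite /y; field; lra.
have INR_pred : INR #|T|.-1 = INR #|T| - 1 by rewrite -subn1 minus_INR //; apply/leP.
have invx_ge1 : 1 <= / x by rewrite -Rinv_1; apply: Rinv_le_contravar.
elim: n r => [|n IHn] [|b r] // r_le.
- by rewrite card_supersequences_nil /=; lra.
- rewrite card_supersequences_nil subn0 -Rpow_mult_distr INR_expn.
  apply: pow_incr; split; first exact: pos_INR.
  by rewrite Rmult_comm y_over_x; lra.
- have -> : (n.+1 - size (b :: r) = n - size r)%N by [].
  rewrite card_supersequencesS plus_INR mult_INR INR_pred.
  have IHr := IHn r r_le.
  have [r_lt | r_gt | r_eq] := ltngtP (size r) n; last 2 first.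
  + by move: r_le; rewrite /= ltnS leqNgt r_gt.
  + rewrite (@card_supersequences_small _ n (b :: r)); last by rewrite /= r_eq.
    rewrite r_eq subnn in IHr *.
    have : 0 <= y ^ n by apply: pow_le; lra.
    rewrite /= in IHr *; nra.
  have IHbr := IHn (b :: r) r_lt.
  rewrite /= -(subnSK r_lt) /= in IHr IHbr *.
  set d := (n - (size r).+1)%N in IHr IHbr *.
  have -> : (/ x) ^ d.+1 * y ^ n.+1 = (/ x) ^ d.+1 * y ^ n + (INR #|T| - 1) * ((/ x) ^ d * y ^ n).
    transitivity ((/ x) ^ d * y ^ n * (/ x + (INR #|T| - 1))); last by rewrite /=; ring.
    by rewrite -y_over_x /=; ring.
  apply: Rplus_le_compat => //.
  by apply: Rmult_le_compat_l => //; rewrite -INR_pred; apply: pos_INR.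
Qed.

Lemma Rdiv_ge0 a b : 0 <= a -> 0 < b -> 0 <= a / b.
Proof. by move=> a_ge0 b_gt0; apply: Rmult_le_pos => //; apply/Rlt_le/Rinv_0_lt_compat. Qed.

Lemma ln_gt0 x : 1 < x -> 0 < ln x.
Proof. by move=> x_gt1; rewrite -ln_1; apply: ln_increasing; lra. Qed.

Lemma ln_ge0 x : 1 <= x -> 0 <= ln x.
Proof.
case/Rle_lt_or_eq_dec=> [/ln_gt0|<-]; last rewrite ln_1; lra.
Qed.

Lemma ln_lt0 x : 0 < x < 1 -> ln x < 0.
Proof. by move=> x01; rewrite -ln_1; apply: ln_increasing; lra. Qed.

Lemma Hq_ln q k : 1 < INR q -> 0 < k < 1 ->
  Hq q k * ln (INR q) = k * ln (INR q - 1) - k * ln k - (1 - k) * ln (1 - k).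
Proof.
move=> q_gt1 [k_gt0 k_lt1]; have := ln_gt0 _ q_gt1.
rewrite /Hq /logq; case: (Rle_dec k 0) => [|_] /=; first lra.
by case: (Rle_dec 1 k) => [|_] /= lnq; [lra | field; lra].
Qed.

Lemma Hq_ge0 q k : (2 <= q)%N -> 0 <= Hq q k.
Proof.
move=> q_ge2; have q_ge2R : 2 <= INR q by apply: (le_INR 2); apply/leP.
rewrite /Hq; case: (Rle_dec k 0) => [|k_gt0] /=; first lra.
case: (Rle_dec 1 k) => [|k_lt1] /=; first lra.
have lnq : 0 < ln (INR q) by apply: ln_gt0; lra.
have ln_q1 : 0 <= ln (INR q - 1) by apply: ln_ge0; lra.
have ln_k : ln k < 0 by apply: ln_lt0; lra.
have ln_1k : ln (1 - k) < 0 by apply: ln_lt0; lra.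
rewrite /logq (_ : _ - _ - _ =
  (k * ln (INR q - 1) - k * ln k - (1 - k) * ln (1 - k)) / ln (INR q)); last by field; lra.
by apply: Rdiv_ge0 => //; nra.
Qed.

Lemma Rpower_Hq q k t : 1 < INR q -> 0 < k < 1 ->
  Rpower ((INR q - 1) * (1 - k) / k) (k * t) * Rpower (/ (1 - k)) t =
  Rpower (INR q) (Hq q k * t).
Proof.
move=> q_gt1 k01; have := Hq_ln _ _ q_gt1 k01; case: k01 => k_gt0 k_lt1 H_ln.
rewrite /Rpower -exp_plus; congr exp.
have q1_gt0 : 0 < INR q - 1 by lra.
have ln_ratio : ln ((INR q - 1) * (1 - k) / k) = ln (INR q - 1) + ln (1 - k) - ln k.
  rewrite /Rdiv !ln_mult ?ln_Rinv //; try lra.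
    by apply: Rmult_lt_0_compat; lra.
  exact: Rinv_0_lt_compat.
rewrite ln_ratio ln_Rinv; last lra.
have -> : Hq q k * t * ln (INR q) = t * (Hq q k * ln (INR q)) by ring.
by rewrite H_ln; ring.
Qed.

Lemma card_supersequences_entropy q kappa n (r : seq 'I_q) :
  (2 <= q)%N -> 0 <= kappa < (INR q - 1) / INR q ->
  (size r <= n)%N -> INR (n - size r) <= kappa * INR n ->
  INR #|supersequences 'I_q n r| <= Rpower (INR q) (Hq q kappa * INR n).
Proof.
move=> q_ge2 [k_ge0 k_lt] r_le del_le.
have q_ge2R : 2 <= INR q by apply: (le_INR 2); apply/leP.
have k_lt1 : kappa < 1.
  have : (INR q - 1) / INR q = 1 - / INR q by field; lra.
  have : 0 < / INR q by apply: Rinv_0_lt_compat; lra.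
  lra.
have [k_gt0 | k_eq0] := Rle_lt_or_eq_dec _ _ k_ge0; last first.
  subst kappa.
  have no_del : INR (n - size r) = 0 by have := pos_INR (n - size r); lra.
  have r_eq : size r = n.
    by apply/eqP; rewrite eqn_leq r_le -subn_eq0 (INR_eq _ 0 no_del).
  rewrite /Hq; case: (Rle_dec 0 0) => [_|] /=; last lra.
  rewrite Rmult_0_l Rpower_O; last lra.
  by apply: (le_INR _ 1); apply/leP; exact: card_supersequences_full.
(* The minimiser of x^-kappa (1 + (q - 1) x). *)
set x := kappa / ((INR q - 1) * (1 - kappa)).
have denom_gt0 : 0 < (INR q - 1) * (1 - kappa) by apply: Rmult_lt_0_compat; lra.
have x_gt0 : 0 < x by apply: Rdiv_lt_0_compat.
have x_le1 : x <= 1.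
  have kq_lt : kappa * INR q < INR q - 1.
    have := Rmult_lt_compat_r (INR q) _ _ ltac:(lra) k_lt.
    by rewrite /Rdiv Rmult_assoc Rinv_l; lra.
  have : 0 <= ((INR q - 1) * (1 - kappa) - kappa) / ((INR q - 1) * (1 - kappa)).
    by apply: Rdiv_ge0 => //; nra.
  by rewrite /x /Rdiv Rmult_minus_distr_r Rinv_r; lra.
apply: Rle_trans (card_supersequences_le _ _ _ _ (conj x_gt0 x_le1) _ r_le) _.
  by rewrite card_ord; lia.
have q_gt1 : 1 < INR q by lra.
rewrite card_ord -(Rpower_Hq _ _ (INR n) q_gt1 (conj k_gt0 k_lt1)).
have -> : (INR q - 1) * (1 - kappa) / kappa = / x by rewrite /x; field; lra.
have -> : / (1 - kappa) = 1 + (INR q - 1) * x by rewrite /x; field; lra.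
have invx_ge1 : 1 <= / x by rewrite -Rinv_1; apply: Rinv_le_contravar.
rewrite -!Rpower_pow; try nra.
apply: Rmult_le_compat_r; first exact/Rlt_le/exp_pos.
exact: Rle_Rpower.
Qed.

(** * Random subsets meeting a fixed set *)

Lemma card_bigcup_le (T I : finType) (P : pred I) (F : I -> {set T}) :
  (#|\bigcup_(i | P i) F i| <= \sum_(i | P i) #|F i|)%N.
Proof.
elim/big_rec2: _ => [|i A n _ le_An]; first by rewrite cards0.
by apply: leq_trans (leq_card_setU _ _) _; rewrite leq_add2l.
Qed.

Lemma exists_subset_card (T : finType) (B : {set T}) k :
  (k <= #|B|)%N -> exists2 A : {set T}, A \subset B & #|A| = k.
Proof.
move=> /card_geqP [s [s_uniq s_size s_sub]].
exists [set x in s]; first by apply/subsetP => x; rewrite inE; apply: s_sub.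
by rewrite cardsE (card_uniqP s_uniq).
Qed.

Lemma card_draws_supset (T : finType) (A : {set T}) M :
  (#|A| <= M <= #|T|)%N ->
  #|[set C : {set T} | (#|C| == M) && (A \subset C)]| = 'C(#|T| - #|A|, M - #|A|).
Proof.
move=> /andP [A_le M_le].
rewrite -sum1dep_card (reindex_inj (@setC_inj T)) /=.
rewrite (eq_bigl (fun D : {set T} => (D \subset ~: A) && (#|D| == #|T| - M)%N)); last first.
  move=> D; rewrite subsetC andbC; congr andb.
  by have := cardsC D => cardsCD; apply/eqP/eqP; lia.
rewrite sum1dep_card cards_draws cardsCs setCK -bin_sub; last by lia.
by congr binomial; lia.
Qed.

Lemma leq_bin_exp n k : ('C(n, k) <= n ^ k)%N.
Proof.
apply: (@leq_trans (n ^_ k)); first by rewrite -bin_ffact leq_pmulr ?fact_gt0.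
elim: k => [|k IHk]; first by rewrite ffactn0.
by rewrite ffactnSr expnSr leq_mul ?leq_subr.
Qed.

Lemma bin_subn_le N M k : (M <= N)%N -> (0 < N)%N -> (k <= M)%N ->
  INR 'C(N - k, M - k) <= INR 'C(N, M) * (INR M / INR N) ^ k.
Proof.
move=> M_le N_gt0; elim: k => [|k IHk] k_lt; first by rewrite !subn0 /=; lra.
have := IHk (ltnW k_lt).
have Nk_gt0 : 0 < INR (N - k) by apply: lt_0_INR; apply/ltP; lia.
have N_gt0R : 0 < INR N by apply: lt_0_INR; apply/ltP.
have bin_step : INR 'C(N - k.+1, M - k.+1) = INR (M - k) / INR (N - k) * INR 'C(N - k, M - k).
  have := f_equal INR (mul_bin_diag (N - k) (M - k.+1)).
  rewrite !mult_INR (_ : (N - k).-1 = N - k.+1)%N; last by lia.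
  rewrite (_ : (M - k.+1).+1 = M - k)%N; last by lia.
  move=> e; apply: (Rmult_eq_reg_l (INR (N - k))); last lra.
  by rewrite e; field; lra.
have ratio_le : INR (M - k) / INR (N - k) <= INR M / INR N.
  rewrite !minus_INR; try (apply/leP; lia).
  have k_leR : INR k <= INR M by apply: le_INR; apply/leP; lia.
  have M_leR : INR M <= INR N by apply: le_INR; apply/leP.
  have k_ltR : INR k < INR N by apply: lt_INR; apply/ltP; lia.
  have : 0 <= INR k * (INR N - INR M) / (INR N * (INR N - INR k)).
    apply: Rdiv_ge0; last by apply: Rmult_lt_0_compat; lra.
    by apply: Rmult_le_pos; [apply: pos_INR | lra].
  have -> : INR k * (INR N - INR M) / (INR N * (INR N - INR k)) =
            INR M / INR N - (INR M - INR k) / (INR N - INR k) by field; lra.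
  lra.
rewrite bin_step /= => IHk'.
have ratio_ge0 : 0 <= INR (M - k) / INR (N - k) by apply: Rdiv_ge0; [apply: pos_INR | lra].
apply: Rle_trans (Rmult_le_compat _ _ _ _ ratio_ge0 (pos_INR _) ratio_le IHk') _.
by apply: Req_le; ring.
Qed.

Lemma card_draws_meet_le (T : finType) (S : {set T}) k M :
  (M <= #|T|)%N -> (0 < #|T|)%N ->
  INR #|[set C : {set T} | (#|C| == M) && (k <= #|C :&: S|)%N]|
  <= INR 'C(#|S|, k) * (INR 'C(#|T|, M) * (INR M / INR #|T|) ^ k).
Proof.
move=> M_le T_gt0.
have rhs_ge0 : 0 <= INR 'C(#|S|, k) * (INR 'C(#|T|, M) * (INR M / INR #|T|) ^ k).
  apply/Rmult_le_pos/Rmult_le_pos; try exact: pos_INR.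
  by apply/pow_le/Rdiv_ge0; [apply: pos_INR | apply/lt_0_INR/ltP].
have [k_le | M_lt] := leqP k M; last first.
  rewrite (_ : #|_| = 0%N) //; apply: eq_card0 => C; rewrite inE.
  apply/negP => /andP [/eqP C_card k_le_CS].
  have := leq_trans k_le_CS (subset_leq_card (subsetIl C S)).
  by rewrite C_card leqNgt M_lt.
pose supsets (A : {set T}) := [set C : {set T} | (#|C| == M) && (A \subset C)].
have cover : [set C : {set T} | (#|C| == M) && (k <= #|C :&: S|)%N] \subset
    \bigcup_(A in [set A : {set T} | A \subset S & #|A| == k]) supsets A.
  apply/subsetP => C; rewrite inE => /andP [C_card /exists_subset_card [A A_sub A_card]].
  apply/bigcupP; exists A; rewrite !inE.
    by rewrite (subset_trans A_sub (subsetIr _ _)) A_card eqxx.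
  by rewrite C_card (subset_trans A_sub (subsetIl _ _)).
have := leq_trans (subset_leq_card cover) (card_bigcup_le _ _ _ _).
rewrite (eq_bigr (fun _ => 'C(#|T| - k, M - k))); last first.
  move=> A; rewrite inE => /andP [_ /eqP A_card].
  by rewrite -A_card; apply: card_draws_supset; rewrite A_card k_le M_le.
rewrite sum_nat_const cards_draws => /leP/le_INR; rewrite mult_INR => le_bad.
apply: Rle_trans le_bad _; apply: Rmult_le_compat_l; first exact: pos_INR.
exact: bin_subn_le.
Qed.

(** * Random codes *)

Lemma pboolP (P : Prop) : reflect P (pbool P).
Proof. by rewrite /pbool; case: excluded_middle_informative => p; constructor. Qed.

Lemma code_size_le q n Rt : INR (code_size q n Rt) <= Rpower (INR q) (Rt * INR n).
Proof.
rewrite /code_size; set y := Rpower _ _.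
have y_gt0 : 0 < y by apply: exp_pos.
have [int_le _] := base_Int_part y.
case: (Z.le_gt_cases 0 (Int_part y)) => [int_ge0 | ].
  by rewrite INR_IZR_INZ Z2Nat.id.
by case: (Int_part y) int_le => //= p _ _; lra.
Qed.

Lemma code_size_leq q n Rt : (0 < q)%N -> Rt <= 1 -> (code_size q n Rt <= q ^ n)%N.
Proof.
move=> q_gt0 Rt_le1; apply/leP/INR_le.
apply: Rle_trans (code_size_le q n Rt) _.
rewrite INR_expn -Rpower_pow; last by apply/lt_0_INR/ltP.
apply: Rle_Rpower; first by apply: (le_INR 1); apply/leP.
by have := pos_INR n; nra.
Qed.

Lemma exists_nat_between L : 0 <= L -> exists k : nat, L < INR k <= L + 1.
Proof.
move=> L_ge0; have [up_gt up_le] := archimed L.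
exists (Z.to_nat (up L)); rewrite INR_IZR_INZ Z2Nat.id; first lra.
by apply: le_IZR; lra.
Qed.

Lemma sum_INR_le (I : finType) (P : pred I) (f : I -> nat) X :
  0 <= X -> (forall i, P i -> INR (f i) <= X) ->
  INR (\sum_(i | P i) f i) <= INR #|I| * X.
Proof.
move=> X_ge0 f_le.
have : INR (\sum_(i | P i) f i) <= INR (\sum_(i | P i) 1) * X.
  elim/big_rec2: _ => [|i a b Pi ab]; first by rewrite /=; lra.
  by rewrite !plus_INR (_ : INR 1 = 1) //; have := f_le i Pi; lra.
move/Rle_trans; apply; apply: Rmult_le_compat_r => //; apply: le_INR.
by apply/leP; rewrite sum1_card max_card.
Qed.

Lemma not_list_decodable_witness q n kappa L k (C : {set word q n}) :
  0 <= L -> INR k <= L + 1 -> ~ list_decodable_deletions q n kappa L C ->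
  exists2 r : seq 'I_q, (size r <= n)%N /\ INR (n - size r) <= kappa * INR n
    & (k <= #|C :&: supersequences 'I_q n r|)%N.
Proof.
move=> L_ge0 k_le /not_all_ex_not [r /Rnot_le_lt many].
set D := [set c in C | _] in many.
have D_sub : D \subset C :&: supersequences 'I_q n r.
  by apply/subsetP => c; rewrite !inE => /andP [-> /pboolP []].
have /card_gt0P [c] : (0 < #|D|)%N by apply/ltP/INR_lt; exact: Rle_lt_trans L_ge0 many.
rewrite inE => /andP [_ /pboolP [r_sub del_le]].
exists r; first by split=> //; rewrite -(size_tuple c); exact: size_subseq.
apply: leq_trans (subset_leq_card D_sub); rewrite -ltnS; apply/ltP/INR_lt.
by rewrite S_INR; lra.
Qed.

Lemma card_codes_meet_supersequences_le q n M k kappa (r : seq 'I_q) :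
  (2 <= q)%N -> 0 <= kappa < (INR q - 1) / INR q -> (M <= q ^ n)%N ->
  (size r <= n)%N -> INR (n - size r) <= kappa * INR n ->
  INR #|[set C : {set word q n} | (#|C| == M) && (k <= #|C :&: supersequences 'I_q n r|)%N]|
  <= Rpower (INR q) (Hq q kappa * INR n) ^ k * (INR 'C(q ^ n, M) * (INR M / INR (q ^ n)) ^ k).
Proof.
move=> q_ge2 kappa_bounds M_le r_le del_le.
have card_words : #|{: word q n}| = (q ^ n)%N by rewrite card_tuple card_ord.
have words_gt0 : (0 < #|{: word q n}|)%N by rewrite card_words expn_gt0; lia.
have M_le_words : (M <= #|{: word q n}|)%N by rewrite card_words.
have := card_draws_meet_le _ (supersequences 'I_q n r) k _ M_le_words words_gt0.
rewrite card_words => /Rle_trans; apply; apply: Rmult_le_compat_r.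
  apply: Rmult_le_pos; first exact: pos_INR.
  by apply/pow_le/Rdiv_ge0; [apply: pos_INR | rewrite -card_words; apply/lt_0_INR/ltP].
apply: Rle_trans (le_INR _ _ (leP (leq_bin_exp _ _))) _.
rewrite INR_expn; apply: pow_incr; split; first exact: pos_INR.
exact: card_supersequences_entropy.
Qed.

Lemma card_bad_codes_le q n M k kappa L :
  (2 <= q)%N -> 0 <= kappa < (INR q - 1) / INR q -> 0 <= L -> INR k <= L + 1 ->
  (M <= q ^ n)%N ->
  INR #|[set C : {set word q n} |
          (#|C| == M) && ~~ pbool (list_decodable_deletions q n kappa L C)]|
  <= INR n.+1 * INR (q ^ n) *
     (Rpower (INR q) (Hq q kappa * INR n) * (INR M / INR (q ^ n))) ^ k * INR 'C(q ^ n, M).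
Proof.
move=> q_ge2 kappa_bounds L_ge0 k_le M_le.
pose S (i : 'I_n.+1 * word q n) := supersequences 'I_q n (take i.1 i.2).
pose meet i := [set C : {set word q n} | (#|C| == M) && (k <= #|C :&: S i|)%N].
pose few_deletions (i : 'I_n.+1 * word q n) := pbool (INR (n - i.1) <= kappa * INR n).
have cover : [set C : {set word q n} | (#|C| == M) &&
    ~~ pbool (list_decodable_deletions q n kappa L C)] \subset
    \bigcup_(i | few_deletions i) meet i.
  apply/subsetP => C; rewrite inE => /andP [C_card /pboolP not_decodable].
  have [r [r_le del_le] r_meet] :=
    not_list_decodable_witness _ _ _ _ _ _ L_ge0 k_le not_decodable.
  (* [r] is the prefix of length [size r] of its padding to a word of length [n]. *)
  pose a : 'I_q := Ordinal (ltnW q_ge2).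
  have pad_size : size (r ++ nseq (n - size r) a) == n.
    by rewrite size_cat size_nseq subnKC.
  apply/bigcupP; exists (Ordinal (r_le : (size r < n.+1)%N), Tuple pad_size).
    exact/pboolP.
  by rewrite inE C_card /S /= take_size_cat.
pose X := Rpower (INR q) (Hq q kappa * INR n) ^ k *
  (INR 'C(q ^ n, M) * (INR M / INR (q ^ n)) ^ k).
have X_ge0 : 0 <= X.
  apply: Rmult_le_pos; first exact/pow_le/Rlt_le/exp_pos.
  apply: Rmult_le_pos; first exact: pos_INR.
  by apply/pow_le/Rdiv_ge0; [apply: pos_INR | apply/lt_0_INR/ltP; rewrite expn_gt0; lia].
have meet_le i : few_deletions i -> INR #|meet i| <= X.
  move=> /pboolP del_le.
  have size_take_i : size (take i.1 i.2) = i.1 by rewrite size_takel // size_tuple -ltnS.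
  apply: card_codes_meet_supersequences_le; rewrite ?size_take_i //.
  by rewrite -ltnS.
have := leq_trans (subset_leq_card cover) (card_bigcup_le _ _ _ _).
move=> /leP/le_INR/Rle_trans; apply.
apply: Rle_trans (sum_INR_le _ _ _ _ X_ge0 meet_le) _.
rewrite card_prod card_ord card_tuple card_ord mult_INR /X Rpow_mult_distr.
by apply: Req_le; ring.
Qed.

Lemma prob_random_code_ge q n M (P : {set word q n} -> Prop) delta :
  (M <= q ^ n)%N ->
  INR #|[set C : {set word q n} | (#|C| == M) && ~~ pbool (P C)]| <= delta * INR 'C(q ^ n, M) ->
  prob_random_code q n M P >= 1 - delta.
Proof.
move=> M_le bad_le; rewrite /prob_random_code.
have codes_eq : #|[set C : {set word q n} | #|C| == M]| = 'C(q ^ n, M).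
  by rewrite card_draws card_tuple card_ord.
set good := #|[set C : {set word q n} | (#|C| == M) && pbool (P C)]|.
set bad := #|[set C : {set word q n} | (#|C| == M) && ~~ pbool (P C)]| in bad_le *.
have codes_split : (good + bad)%N = 'C(q ^ n, M).
  rewrite -codes_eq -(cardsID [set C : {set word q n} | pbool (P C)]
                               [set C : {set word q n} | #|C| == M]).
  by congr addn; apply: eq_card => C; rewrite !inE // andbC.
have codes_gt0 : 0 < INR 'C(q ^ n, M) by apply/lt_0_INR/ltP; rewrite bin_gt0.
have bad_ratio : INR bad / INR 'C(q ^ n, M) <= delta.
  by apply: (Rmult_le_reg_r _ _ _ codes_gt0); rewrite /Rdiv Rmult_assoc Rinv_l; lra.
rewrite codes_eq (_ : INR good = INR 'C(q ^ n, M) - INR bad); last first.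
  by rewrite -codes_split plus_INR; ring.
apply: Rle_ge; rewrite (_ : _ / _ = 1 - INR bad / INR 'C(q ^ n, M)); [lra | field; lra].
Qed.

Lemma failure_probability_le q n k H eps M : (2 <= q)%N -> 3 <= eps * INR k ->
  INR M <= Rpower (INR q) ((1 - H - eps) * INR n) ->
  INR n.+1 * INR (q ^ n) * (Rpower (INR q) (H * INR n) * (INR M / INR (q ^ n))) ^ k
  <= Rpower (INR q) (- INR n).
Proof.
move=> q_ge2 eps_k M_le.
have q_gt1 : 1 < INR q by apply: (lt_INR 1); apply/ltP.
have Rpower_gt0 t : 0 < Rpower (INR q) t by apply: exp_pos.
have qn_eq : INR (q ^ n) = Rpower (INR q) (INR n) by rewrite INR_expn Rpower_pow; lra.
rewrite qn_eq.
set ratio := Rpower (INR q) (H * INR n) * (INR M / Rpower (INR q) (INR n)).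
have ratio_ge0 : 0 <= ratio.
  by apply: Rmult_le_pos; [exact: Rlt_le | apply: Rdiv_ge0; [apply: pos_INR | done]].
have ratio_le : ratio <= Rpower (INR q) (- eps * INR n).
  rewrite (_ : - eps * INR n = H * INR n + ((1 - H - eps) * INR n) + - INR n); last by ring.
  rewrite !Rpower_plus Rpower_Ropp /ratio /Rdiv -Rmult_assoc.
  apply: Rmult_le_compat_r; first exact/Rlt_le/Rinv_0_lt_compat.
  by apply: Rmult_le_compat_l; first exact: Rlt_le.
have ratio_pow_le : ratio ^ k <= Rpower (INR q) (-3 * INR n).
  apply: Rle_trans (pow_incr _ _ k (conj ratio_ge0 ratio_le)) _.
  rewrite -Rpower_pow // Rpower_mult; apply: Rle_Rpower; first lra.
  by have := pos_INR n; nra.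
have n1_le : INR n.+1 <= Rpower (INR q) (INR n).
  by rewrite -qn_eq; apply/le_INR/leP/ltn_expl.
apply: Rle_trans (Rmult_le_compat _ _ _ _ _ (pow_le _ _ ratio_ge0)
  (Rmult_le_compat_r _ _ _ (Rlt_le _ _ (Rpower_gt0 (INR n))) n1_le) ratio_pow_le) _.
  by apply: Rmult_le_pos; [apply: pos_INR | exact: Rlt_le].
by rewrite -!Rpower_plus; apply: Req_le; congr Rpower; ring.
Qed.

(* MathComp binds the [%R] key to its ring scope; the statement uses it for the reals. *)
Delimit Scope R_scope with R.

Theorem mainTheorem7 :
  forall q : nat, leq 2 q ->
  exists Cst : R, (0 < Cst)%R /\
  exists eps0 : R, (0 < eps0)%R /\
  forall eps kappa : R,
    (0 < eps)%R -> (eps < 1)%R -> (eps < eps0)%R ->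
    (0 <= kappa)%R -> (kappa < (INR q - 1) / INR q)%R ->
    exists N : nat, forall n : nat, leq N n ->
      (prob_random_code q n (code_size q n (1 - Hq q kappa - eps)%R)
         (list_decodable_deletions q n kappa (Cst / eps)%R)
       >= 1 - Rpower (INR q) (- INR n))%R.
Proof.
move=> q q_ge2; exists 3; split; first lra; exists 1; split; first lra.
move=> eps kappa eps_gt0 _ _ kappa_ge0 kappa_lt; exists 0%N => n _.
have L_ge0 : 0 <= 3 / eps by apply: Rdiv_ge0; lra.
have [k [k_gt k_le]] := exists_nat_between _ L_ge0.
have eps_k : 3 <= eps * INR k.
  have := Rmult_lt_compat_l eps _ _ eps_gt0 k_gt.
  by rewrite (_ : eps * (3 / eps) = 3); [lra | field; lra].
set M := code_size q n (1 - Hq q kappa - eps).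
have M_le : (M <= q ^ n)%N.
  by apply: code_size_leq; [lia | have := Hq_ge0 q kappa q_ge2; lra].
apply: prob_random_code_ge => //.
have := card_bad_codes_le _ _ _ _ _ _ q_ge2 (conj kappa_ge0 kappa_lt) L_ge0 k_le M_le.
move/Rle_trans; apply.
apply: Rmult_le_compat_r; first exact: pos_INR.
exact: failure_probability_le (code_size_le _ _ _).
Qed.
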